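(* Let $\varphi:\mathbb{R}\to\mathbb{R}_+$ be convex and twice differentiable, and suppose $\beta_\varphi>0$ satisfies $[\varphi'(x)]^2\le\beta_\varphi\varphi''(x)$ for all $|x|\le1$. Then for any $\beta\ge\beta_\varphi$, the aggregate classifier $\tilde h_n(x)=\hat\theta_n^\top H(x)$, where $\hat\theta_n$ is the mirror averaging aggregate with parameter $\beta$, satisfies $$E_n\varphi(-Y_n\tilde h_n(X_n))\le\min_{1\le j\le M}E\varphi(-Yh_j(X))+\frac{\beta\log M}{n}.$$
   Context: $(\mathcal{X},\mathcal{F})$ is a measurable space; $(X,Y)$ is a random pair with $X\in\mathcal{X}$, $Y\in\{-1,1\}$; $(X_1,Y_1),\dots,(X_n,Y_n)$ are i.i.d. copies of $(X,Y)$, $E_n$ is expectation w.r.t. them. $h_1,\dots,h_M:\mathcal{X}\to[-1,1]$ are fixed classifiers ($M\ge2$), $H(x)=(h_1(x),\dots,h_M(x))^\top$. $\Theta$ is the simplex in $\mathbb{R}^M$, $e_j$ the unit vectors. Loss: $Q((x,y),\theta)=\varphi(-y\theta^\top H(x))$. Mirror averaging aggregate with parameter $\beta$, with $Z_i=(X_i,Y_i)$: $\zeta_0=0$, $\zeta_i=\zeta_{i-1}+u_i$ ($i=1,\dots,n-1$), $u_i=(Q(Z_i,e_1),\dots,Q(Z_i,e_M))^\top$; $\theta_i^{(j)}=e^{-\zeta_i^{(j)}/\beta}/\sum_ke^{-\zeta_i^{(k)}/\beta}$ for $i=0,\dots,n-1$; $\hat\theta_n=\frac1n\sum_{i=1}^n\theta_{i-1}$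 (a function of $Z_1,\dots,Z_{n-1}$). *)

From HB Require Import structures.
From mathcomp Require Import all_boot all_order all_algebra.
From mathcomp Require Import all_classical all_reals all_analysis.
Set Implicit Arguments. Unset Strict Implicit. Unset Printing Implicit Defensive.
Import Order.TTheory GRing.Theory Num.Theory.
Local Open Scope ring_scope.
Local Open Scope classical_set_scope.

(* A labeled observation z = (x, b); the label y in {-1,1} is encoded by a
   boolean: y = 1 if b = true, y = -1 if b = false. *)
Definition lab {R : realType} (b : bool) : R := if b then 1 else -1.

Section Defs.
Context {R : realType} {d : measure_display} {T : measurableType d}.
Context (phi : R -> R) (M : nat) (h : 'I_M -> T -> R) (beta : R).

Definition lossj (j : 'I_M) (z : T * bool) : R := phi (- lab z.2 * h j z.1).

Definition zeta (s : seq (T * bool)) (j : 'I_M) : R :=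
  \sum_(z <- s) lossj j z.

Definition theta_w (s : seq (T * bool)) (j : 'I_M) : R :=
  expR (- zeta s j / beta) / \sum_(k < M) expR (- zeta s k / beta).

(* hat theta_n = (1/n) sum_{i=1}^n theta_{i-1}, computed from the sample
   s = [:: Z_1; ...; Z_(n-1)] (only its first n-1 entries are used). *)
Definition theta_hat (n : nat) (s : seq (T * bool)) (j : 'I_M) : R :=
  n%:R^-1 * \sum_(i < n) theta_w (take i s) j.

Definition h_agg (n : nat) (s : seq (T * bool)) (x : T) : R :=
  \sum_(j < M) theta_hat n s j * h j x.

End Defs.

(* E_n: expectation over n i.i.d. observations with common law P, written as
   the iterated integral over z_1, ..., z_n (integrands here are nonnegative). *)
Fixpoint iter_expect {R : realType} {d : measure_display} {A : measurableType d}
  (P : probability A R) (n : nat) (f : seq A -> \bar R) : \bar R :=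
  match n with
  | 0 => f [::]
  | k.+1 => (\int[P]_z iter_expect P k (fun s => f (z :: s)))%E
  end.

(* phi(-Y_n tilde h_n(X_n)) as a function of the sample s = [:: Z_1; ...; Z_n]
   (Z_n is the last entry; tilde h_n only uses the first n-1 entries). *)
Definition agg_loss {R : realType} {d : measure_display} {T : measurableType d}
  (phi : R -> R) (M : nat) (h : 'I_M -> T -> R) (beta : R) (n : nat)
  (s : seq (T * bool)) : R :=
  match s with
  | [::] => 0
  | z0 :: s' => let zn := last z0 s' in
      phi (- lab zn.2 * h_agg phi h beta n s zn.1)
  end.

From HB Require Import structures.
From mathcomp Require Import all_boot all_order all_algebra.
From mathcomp Require Import all_classical all_reals all_analysis.
From mathcomp Require Import measurable_realfun ring lra.
Import Order.TTheory GRing.Theory Num.Theory.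
Local Open Scope ring_scope.
Local Open Scope classical_set_scope.

(* The hypothesis on phi says exactly that x |-> -exp(-phi(x)/beta) has a
   nonnegative second derivative on [-1, 1], i.e. that exp(-phi/beta) is
   concave there.  Writing W_i = sum_k exp(-zeta_i^(k)/beta), so that
   theta_i is proportional to the summands of W_i, Jensen's inequality for
   this concave function gives W_(i+1)/W_i <= exp(-Q(Z_(i+1), theta_i)/beta):
   the loss of theta_i at the next observation is at most beta times the drop
   of ln W_i.  Telescoping, with W_0 = M and W_n >= exp(-zeta_n^(j)/beta),
   bounds the cumulative online loss by beta ln M + zeta_n^(j) for every
   sample and every j.  Convexity of phi bounds the loss of the aggregate
   hat theta_n at Z_n by the average over i of the losses of theta_i at Z_n,
   and since Z_n and Z_(i+1) are both independent of Z_1, ..., Z_i with law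
   P, these have the same expectations as the online losses; dividing by n
   gives the bound. *)

Lemma derive2_ge0_convex {R : realType} (f : R -> R) (a b : R) :
  (forall x, derivable f x 1) -> (forall x, derivable (derive1 f) x 1) ->
  (forall x, a < x < b -> 0 <= derive1n 2 f x) ->
  forall x y t, a <= x <= b -> a <= y <= b -> 0 <= t <= 1 ->
  f (t * x + (1 - t) * y) <= t * f x + (1 - t) * f y.
Proof.
move=> df ddf f2_ge0.
have Df : 'D_1 f = derive1 f by apply/funext => x; rewrite derive1E.
have cvx u v (t : {i01 R}) : a <= u -> u <= v -> v <= b ->
    f (t%:num * u + (1 - t%:num) * v) <= t%:num * f u + (1 - t%:num) * f v.
  move=> au uv vb; rewrite -!convRE; apply: second_derivative_convex => //.
  - move=> x /andP[ux xv]; rewrite Df -derive1E -[derive1 _ x]/(derive1n 2 f x).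
    by apply: f2_ge0; apply/andP; split; [exact: le_lt_trans ux|exact: lt_le_trans vb].
  - exact/cvg_at_left_filter/differentiable_continuous/derivable1_diffP.
  - exact/cvg_at_right_filter/differentiable_continuous/derivable1_diffP.
  - by move=> x _; rewrite Df.
move=> x y t /andP[ax xb] /andP[ay yb] /andP[t0 t1].
have [xy|yx] := leP x y; first exact: (cvx x y (Itv01 t0 t1)).
have t0' : 0 <= 1 - t by lra.
have t1' : 1 - t <= 1 by lra.
have := cvx y x (Itv01 t0' t1') ay (ltW yx) xb; rewrite /= subKr.
by rewrite addrC [t * f x + _]addrC.
Qed.

Lemma derive1_val {R : realType} {f : R -> R} {x df : R} :
  is_derive x 1 f df -> derive1 f x = df.
Proof. by move=> fx; rewrite derive1E; exact: derive_val. Qed.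

Section ExpLossConcave.
Context {R : realType}.
Variables (phi : R -> R) (beta : R).
Hypothesis phi_d1 : forall x, derivable phi x 1.
Hypothesis phi_d2 : forall x, derivable (derive1 phi) x 1.
Hypothesis beta_gt0 : 0 < beta.
Hypothesis phi_exp_concave : forall x, `|x| <= 1 ->
  derive1 phi x ^+ 2 <= beta * derive1n 2 phi x.

Let w x := expR (- phi x / beta).

Let is_derive_phi (x : R) : is_derive x 1 phi (derive1 phi x).
Proof. by rewrite derive1E; exact: derivableP. Qed.

Let is_derive_phi' (x : R) : is_derive x 1 (derive1 phi) (derive1n 2 phi x).
Proof. by rewrite [derive1n 2 phi x]derive1E; exact: derivableP. Qed.

Let is_derive_w (x : R) : is_derive x 1 w (- beta^-1 * (w x * derive1 phi x)).
Proof.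
have dg : is_derive x 1 (fun y => - phi y / beta) (- beta^-1 * derive1 phi x).
  have -> : (fun y => - phi y / beta) = (- beta^-1) \*: phi.
    by apply/funext => y; change (- phi y / beta = - beta^-1 * phi y); ring.
  exact: is_deriveZ.
apply: (is_derive_eq (is_derive1_comp (is_derive_expR _) dg)).
by rewrite /w; ring.
Qed.

Let dw x := beta^-1 * (w x * derive1 phi x).

Let is_derive_neg_w (x : R) : is_derive x 1 (- w) (dw x).
Proof. by apply: (is_derive_eq (is_deriveN (is_derive_w x))); rewrite /dw; ring. Qed.

Let is_derive_dw (x : R) : is_derive x 1 dw
  (beta^-1 ^+ 2 * w x * (beta * derive1n 2 phi x - derive1 phi x ^+ 2)).
Proof.
apply: (is_derive_eq (is_deriveZ _ (is_deriveM (is_derive_w x) (is_derive_phi' x)))).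
by rewrite /= /w /GRing.scale /=; field; rewrite gt_eqF.
Qed.

Lemma neg_expR_phi_convex x y t : -1 <= x <= 1 -> -1 <= y <= 1 -> 0 <= t <= 1 ->
  - expR (- phi (t * x + (1 - t) * y) / beta) <=
  t * - expR (- phi x / beta) + (1 - t) * - expR (- phi y / beta).
Proof.
have D1 : derive1 (- w) = dw by apply/funext => z; exact: derive1_val.
apply: (@derive2_ge0_convex _ (- w) (-1) 1).
- by move=> z; exact: ex_derive.
- by move=> z; rewrite D1; exact: ex_derive.
move=> z /andP[z_gt z_lt]; rewrite /= D1 (derive1_val (is_derive_dw z)).
have z1 : `|z| <= 1 by rewrite ler_norml !ltW.
by rewrite !mulr_ge0 ?subr_ge0 ?phi_exp_concave ?sqr_ge0 ?expR_ge0 ?invr_ge0 ?(ltW beta_gt0).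
Qed.

End ExpLossConcave.

Lemma jensen_finite {R : realType} {S : R -> Prop} {g : R -> R} {k : nat}
    {w x : 'I_k -> R} :
  (forall x y t, S x -> S y -> 0 <= t <= 1 -> S (t * x + (1 - t) * y)) ->
  (forall x y t, S x -> S y -> 0 <= t <= 1 ->
     g (t * x + (1 - t) * y) <= t * g x + (1 - t) * g y) ->
  (forall i, 0 <= w i) -> \sum_(i < k) w i = 1 ->
  (forall i, S (x i)) ->
  S (\sum_(i < k) w i * x i) /\ g (\sum_(i < k) w i * x i) <= \sum_(i < k) w i * g (x i).
Proof.
move=> S_convex g_convex; elim: k w x => [|k IHk] w x w_ge0 w_sum1 Sx.
  by move: w_sum1; rewrite big_ord0 => /esym/eqP; rewrite oner_eq0.
rewrite !big_ord_recl /=; rewrite big_ord_recl in w_sum1.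
set s := \sum_(i < k) w (lift ord0 i) in w_sum1.
have s_ge0 : 0 <= s by apply: sumr_ge0.
have ws : 1 - w ord0 = s by rewrite -w_sum1 addrC addKr.
have w0_itv : 0 <= w ord0 <= 1 by rewrite w_ge0 -subr_ge0 ws.
have [s0|s_neq0] := eqVneq s 0.
  have w_lift0 i : w (lift ord0 i) = 0.
    by move/eqP: s0; rewrite psumr_eq0 // => /allP/(_ i (mem_index_enum _))/eqP.
  have w0_1 : w ord0 = 1 by rewrite -w_sum1 s0 addr0.
  rewrite !big1 => [|i _|i _]; rewrite ?w_lift0 ?mul0r //.
  by rewrite w0_1 !mul1r !addr0.
pose w' i := w (lift ord0 i) / s.
have w'_sum1 : \sum_(i < k) w' i = 1 by rewrite -mulr_suml divff.
have [Sy gy] := IHk w' (fun i => x (lift ord0 i)) (fun i => divr_ge0 (w_ge0 _) s_ge0)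
  w'_sum1 (fun i => Sx _).
have unscale (F : 'I_k -> R) :
    \sum_(i < k) w (lift ord0 i) * F i = (1 - w ord0) * \sum_(i < k) w' i * F i.
  by rewrite ws mulr_sumr; apply: eq_bigr => i _; rewrite /w' mulrA mulrCA divff ?mulr1.
rewrite !unscale; split; first exact: S_convex.
apply: le_trans (g_convex _ _ _ (Sx _) Sy w0_itv) _.
by rewrite lerD2l ler_wpM2l // ws.
Qed.

Lemma lab_mul_itv {R : realType} (b : bool) {y : R} :
  -1 <= y <= 1 -> -1 <= - lab b * y <= 1.
Proof. by case: b => /andP[? ?]; rewrite /lab; apply/andP; split; lra. Qed.

Section ExponentialWeights.
Context {R : realType} {d : measure_display} {T : measurableType d}.
Context (phi : R -> R) {M : nat} (h : 'I_M -> T -> R) (beta : R).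
Hypothesis M_gt0 : (0 < M)%N.

Definition weight_sum (s : seq (T * bool)) : R :=
  \sum_(k < M) expR (- zeta phi h s k / beta).

Definition mixture_loss (z : T * bool) (th : 'I_M -> R) : R :=
  phi (- lab z.2 * \sum_(j < M) th j * h j z.1).

Definition online_loss (s : seq (T * bool)) : R :=
  \sum_(i < size s) mixture_loss (nth point s i) (theta_w phi h beta (take i s)).

Lemma weight_sum_gt0 s : 0 < weight_sum s.
Proof.
rewrite /weight_sum (bigD1 (Ordinal M_gt0)) //= ltr_pwDl ?expR_gt0 //.
by apply: sumr_ge0 => k _; exact: expR_ge0.
Qed.

Lemma theta_w_ge0 s j : 0 <= theta_w phi h beta s j.
Proof. by rewrite divr_ge0 ?expR_ge0 ?ltW ?(weight_sum_gt0 s). Qed.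

Lemma sum_theta_w s : \sum_(j < M) theta_w phi h beta s j = 1.
Proof. by rewrite -mulr_suml divff ?gt_eqF ?(weight_sum_gt0 s). Qed.

Lemma weight_sum_nil : weight_sum [::] = M%:R.
Proof.
rewrite /weight_sum (eq_bigr (fun _ => 1)) ?sumr_const ?card_ord // => k _.
by rewrite /zeta big_nil oppr0 mul0r expR0.
Qed.

Lemma weight_sum_rcons s z : weight_sum (rcons s z) =
  weight_sum s * \sum_(j < M) theta_w phi h beta s j * expR (- lossj phi h j z / beta).
Proof.
rewrite mulr_sumr; apply: eq_bigr => j _.
rewrite /zeta big_rcons /= -/(zeta phi h s j) mulrA mulrCA divff ?mulr1.
  by rewrite -expRD opprD mulrDl.
by rewrite gt_eqF // (weight_sum_gt0 s).
Qed.

Lemma online_loss_rcons s z :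
  online_loss (rcons s z) = online_loss s + mixture_loss z (theta_w phi h beta s).
Proof.
rewrite /online_loss size_rcons big_ord_recr /= nth_rcons ltnn eqxx -cats1 take_size_cat //.
congr (_ + _); apply: eq_bigr => i _.
by rewrite nth_cat ltn_ord takel_cat // ltnW.
Qed.

Lemma agg_loss_mixture n s : size s = n -> (0 < n)%N ->
  agg_loss phi h beta n s = mixture_loss (nth point s n.-1) (theta_hat phi h beta n s).
Proof. by case: s => [<- //|z s] <- _; rewrite /= nth_last. Qed.

Section Regret.
Hypothesis h_range : forall j x, -1 <= h j x <= 1.
Hypothesis phi_d1 : forall x, derivable phi x 1.
Hypothesis phi_d2 : forall x, derivable (derive1 phi) x 1.
Hypothesis beta_gt0 : 0 < beta.
Hypothesis phi_exp_concave : forall x, `|x| <= 1 ->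
  derive1 phi x ^+ 2 <= beta * derive1n 2 phi x.

Lemma mixture_loss_le_ln_weight_drop s z :
  mixture_loss z (theta_w phi h beta s) <=
  beta * (ln (weight_sum s) - ln (weight_sum (rcons s z))).
Proof.
set th := theta_w phi h beta s.
have S_convex (x y t : R) : -1 <= x <= 1 -> -1 <= y <= 1 -> 0 <= t <= 1 ->
    -1 <= t * x + (1 - t) * y <= 1.
  by move=> /andP[? ?] /andP[? ?] /andP[? ?]; apply/andP; split; nra.
have jensen : \sum_(j < M) th j * expR (- lossj phi h j z / beta) <=
    expR (- mixture_loss z th / beta).
  have [_] := jensen_finite (g := fun x => - expR (- phi x / beta)) S_convex
    (neg_expR_phi_convex _ _ phi_d1 phi_d2 beta_gt0 phi_exp_concave)
    (theta_w_ge0 s) (sum_theta_w s)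
    (fun j => lab_mul_itv z.2 (h_range j z.1)).
  move=> J; rewrite -lerN2 -sumrN; under eq_bigr do rewrite -mulrN.
  apply: le_trans J; rewrite /mixture_loss mulr_sumr.
  by under eq_bigr do rewrite mulrCA.
have W_gt0 := weight_sum_gt0 s.
have : ln (weight_sum (rcons s z)) <= ln (weight_sum s * expR (- mixture_loss z th / beta)).
  rewrite ler_ln ?posrE ?mulr_gt0 ?expR_gt0 ?weight_sum_gt0 //.
  by rewrite weight_sum_rcons ler_wpM2l // ltW.
rewrite lnM ?posrE ?expR_gt0 // expRK mulNr => drop.
have : mixture_loss z th / beta <= ln (weight_sum s) - ln (weight_sum (rcons s z)) by lra.
by rewrite ler_pdivrMr // mulrC.
Qed.

Lemma online_loss_le_ln_weight s :
  online_loss s <= beta * (ln M%:R - ln (weight_sum s)).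
Proof.
elim/last_ind: s => [|s z IHs].
  by rewrite weight_sum_nil subrr mulr0 /online_loss big_ord0.
rewrite online_loss_rcons; apply: le_trans (lerD IHs (mixture_loss_le_ln_weight_drop s z)) _.
by rewrite -mulrDr subrKA.
Qed.

Lemma online_loss_le_zeta s j : online_loss s <= beta * ln M%:R + zeta phi h s j.
Proof.
apply: le_trans (online_loss_le_ln_weight s) _.
have : - zeta phi h s j / beta <= ln (weight_sum s).
  rewrite -ler_expR lnK ?posrE ?weight_sum_gt0 // /weight_sum (bigD1 j) //= lerDl.
  by apply: sumr_ge0 => k _; exact: expR_ge0.
rewrite ler_pdivrMr // => zeta_ge.
by rewrite mulrBr lerD2l; lra.
Qed.

End Regret.

Section ConvexLoss.
Hypothesis phi_convex : forall x y t, 0 <= t <= 1 ->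
  phi (t * x + (1 - t) * y) <= t * phi x + (1 - t) * phi y.

Lemma mixture_loss_avg_le n (th : 'I_n -> 'I_M -> R) z : (0 < n)%N ->
  mixture_loss z (fun j => n%:R^-1 * \sum_(i < n) th i j) <=
  \sum_(i < n) n%:R^-1 * mixture_loss z (th i).
Proof.
move=> n_gt0.
have w_ge0 (i : 'I_n) : 0 <= n%:R^-1 :> R by rewrite invr_ge0 ler0n.
have w_sum1 : \sum_(i < n) n%:R^-1 = 1 :> R.
  by rewrite sumr_const card_ord -[_ *+ n]mulr_natr mulVf // pnatr_eq0 -lt0n.
have [_] := jensen_finite (S := fun _ => True) (g := phi) (fun _ _ _ _ _ _ => I)
  (fun x y t _ _ => phi_convex x y t)
  (x := fun i => - lab z.2 * \sum_(j < M) th i j * h j z.1) w_ge0 w_sum1 (fun=> I).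
apply: le_trans; rewrite le_eqVlt /mixture_loss; apply/orP; left; apply/eqP; congr phi.
under [RHS]eq_bigr do rewrite mulrCA; rewrite -mulr_sumr; congr (_ * _).
under eq_bigr do rewrite -mulrA mulr_suml.
by rewrite -!mulr_sumr exchange_big.
Qed.

End ConvexLoss.
End ExponentialWeights.

Section IteratedExpectation.
Local Open Scope ereal_scope.
Context {R : realType} {dA : measure_display} {A : measurableType dA}.
Variable P : probability A R.

(* [iter_expect] integrates out one sample at a time; Fubini-Tonelli needs
   the integrands to be jointly measurable, which is stated on the iterated
   product [iprod k] = A * (A * ... * unit) through [seq_of_iprod k]. *)
Fixpoint iprod_display (k : nat) : measure_display :=
  if k is k.+1 then measure_prod_display (dA, iprod_display k)
  else default_measure_display.

Fixpoint iprod (k : nat) : measurableType (iprod_display k) :=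
  if k is k.+1 then (A * iprod k)%type else unit.

Fixpoint seq_of_iprod (k : nat) : iprod k -> seq A :=
  match k with 0 => fun=> [::] | k.+1 => fun t => t.1 :: seq_of_iprod k t.2 end.

Lemma size_seq_of_iprod k t : size (seq_of_iprod k t) = k.
Proof. by elim: k t => //= k IHk t; rewrite IHk. Qed.

Lemma measurable_nth_seq_of_iprod k m :
  measurable_fun setT (fun t : iprod k => nth point (seq_of_iprod k t) m).
Proof.
elim: k m => [|k IHk] [|m] /=; do ?exact: measurable_cst; first exact: measurable_fst.
exact: measurableT_comp (IHk m) measurable_snd.
Qed.

Lemma measurable_sum_take (g : A -> R) k i : measurable_fun setT g ->
  measurable_fun setT (fun t : iprod k => (\sum_(z <- take i (seq_of_iprod k t)) g z)%R).
Proof.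
move=> mg; elim: k i => [|k IHk] [|i] /=; do ?exact: measurable_cst.
under eq_fun do rewrite big_cons.
exact: measurable_funD (measurableT_comp mg measurable_fst)
  (measurableT_comp (IHk i) measurable_snd).
Qed.

Lemma iter_expect_ge0 k f : (forall s, 0 <= f s) -> 0 <= iter_expect P k f.
Proof. by elim: k f => [|k IHk] f f_ge0 //=; apply: integral_ge0 => z _; exact: IHk. Qed.

Lemma eq_iter_expect k f g : (forall s, size s = k -> f s = g s) ->
  iter_expect P k f = iter_expect P k g.
Proof.
elim: k f g => [|k IHk] f g fg /=; first exact: fg.
by apply: eq_integral => z _; apply: IHk => s sk; apply: fg; rewrite /= sk.
Qed.

Lemma iter_expect_cst k c : iter_expect P k (fun=> c) = c.
Proof.
elim: k => [|k IHk] //=.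
by rewrite IHk integral_cst // -[RHS]mule1; congr (_ * _); exact: probability_setT.
Qed.

Lemma iter_expect_cat m k f :
  iter_expect P (m + k) f = iter_expect P m (fun p => iter_expect P k (fun q => f (p ++ q))).
Proof. by elim: m f => [|m IHm] f //=; apply: eq_integral => z _; exact: IHm. Qed.

Lemma measurable_iter_expect k dX (X : measurableType dX) (F : X -> seq A -> \bar R) :
  measurable_fun setT (fun p : X * iprod k => F p.1 (seq_of_iprod k p.2)) ->
  (forall x s, 0 <= F x s) ->
  measurable_fun setT (fun x => iter_expect P k (F x)).
Proof.
elim: k dX X F => [|k IHk] dX X F mF F_ge0 /=.
  exact: (measurableT_comp mF (pair2_measurable tt)).
pose G xz := iter_expect P k (F xz.1 \o cons xz.2).
have mG : measurable_fun setT G.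
  apply: (IHk _ (X * A)%type) => [|? ?]; last exact: F_ge0.
  have reassoc : measurable_fun setT
      (fun q : (X * A) * iprod k => (q.1.1, (q.1.2, q.2)) : X * iprod k.+1).
    apply: measurable_fun_pair; first exact: measurableT_comp measurable_fst measurable_fst.
    by apply: measurable_fun_pair => //; exact: measurableT_comp measurable_snd measurable_fst.
  exact: (measurableT_comp mF reassoc).
apply: (measurable_fun_fubini_tonelli_F (m2 := P) G mG) => xz.
by apply: iter_expect_ge0 => s; exact: F_ge0.
Qed.

Let measurable_head_integrand k (f : seq A -> \bar R) :
  measurable_fun setT (fun t : iprod k.+1 => f (seq_of_iprod k.+1 t)) ->
  (forall s, 0 <= f s) -> measurable_fun setT (fun z => iter_expect P k (f \o cons z)).
Proof. by move=> mf f_ge0; exact: (@measurable_iter_expect k _ A (fun z s => f (z :: s))). Qed.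

Let measurable_tail_section k (f : seq A -> \bar R) z :
  measurable_fun setT (fun t : iprod k.+1 => f (seq_of_iprod k.+1 t)) ->
  measurable_fun setT (fun t : iprod k => f (z :: seq_of_iprod k t)).
Proof. by move=> mf; exact: (measurableT_comp mf (pair1_measurable z)). Qed.

Lemma iter_expectD k (f g : seq A -> \bar R) :
  (forall s, 0 <= f s) -> (forall s, 0 <= g s) ->
  measurable_fun setT (fun t => f (seq_of_iprod k t)) ->
  measurable_fun setT (fun t => g (seq_of_iprod k t)) ->
  iter_expect P k (fun s => f s + g s) = iter_expect P k f + iter_expect P k g.
Proof.
elim: k f g => [|k IHk] f g f_ge0 g_ge0 mf mg //=.
rewrite -ge0_integralD //; do ?by move=> z _; exact: iter_expect_ge0.
- by apply: eq_integral => z _; apply: IHk => //; exact: measurable_tail_section.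
- exact: measurable_head_integrand.
- exact: measurable_head_integrand.
Qed.

Lemma le_iter_expect k (f g : seq A -> \bar R) :
  (forall s, 0 <= f s) -> (forall s, 0 <= g s) ->
  measurable_fun setT (fun t => f (seq_of_iprod k t)) ->
  measurable_fun setT (fun t => g (seq_of_iprod k t)) ->
  (forall s, size s = k -> f s <= g s) -> iter_expect P k f <= iter_expect P k g.
Proof.
elim: k f g => [|k IHk] f g f_ge0 g_ge0 mf mg fg /=; first exact: fg.
apply: ge0_le_integral => //; do ?exact: measurable_head_integrand.
- by move=> z _; exact: iter_expect_ge0.
move=> z _; apply: IHk => //; do ?exact: measurable_tail_section.
by move=> s sk; apply: fg; rewrite /= sk.
Qed.

Lemma iter_expect_sum k n (f : 'I_n -> seq A -> R) :
  (forall i s, (0 <= f i s)%R) ->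
  (forall i, measurable_fun setT (fun t => f i (seq_of_iprod k t))) ->
  iter_expect P k (fun s => (\sum_(i < n) f i s)%:E) =
  \sum_(i < n) iter_expect P k (fun s => (f i s)%:E).
Proof.
elim: n f => [|n IHn] f f_ge0 mf.
  by under eq_iter_expect do rewrite big_ord0; rewrite big_ord0 iter_expect_cst.
rewrite big_ord_recr /= -IHn //.
under eq_iter_expect do rewrite big_ord_recr EFinD.
rewrite iter_expectD // => [s|s||]; rewrite ?lee_fin ?sumr_ge0 //.
- by apply/measurable_EFinP; exact: measurable_sum.
- exact/measurable_EFinP.
Qed.

Lemma iter_expect_nth k m (g : A -> \bar R) : (m < k)%N ->
  iter_expect P k (fun s => g (nth point s m)) = \int[P]_z g z.
Proof.
elim: k m => [|k IHk] [|m] //= mk.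
  by apply: eq_integral => z _; rewrite iter_expect_cst.
under eq_integral do rewrite IHk //.
by rewrite integral_cst // -[RHS]mule1; congr (_ * _); exact: probability_setT.
Qed.

Lemma iter_expect_take_nth k i m (H : seq A -> A -> \bar R) : (i <= m < k)%N ->
  iter_expect P k (fun s => H (take i s) (nth point s m)) =
  iter_expect P i (fun p => \int[P]_z H p z).
Proof.
move=> /andP[im mk]; rewrite -(subnKC (leq_trans im (ltnW mk))) iter_expect_cat.
apply: eq_iter_expect => p pi.
rewrite -(iter_expect_nth (k - i) (m - i)); last by rewrite ltn_sub2r // (leq_ltn_trans im).
apply: eq_iter_expect => q _.
by rewrite -pi take_size_cat // nth_cat pi ltnNge im /=.
Qed.

End IteratedExpectation.

Lemma measurable_inv_pos {R : realType} dX (X : measurableType dX) (f : X -> R) :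
  measurable_fun setT f -> (forall x, 0 < f x) -> measurable_fun setT (fun x => (f x)^-1).
Proof.
move=> mf f_gt0.
have -> : (fun x => (f x)^-1) = expR \o (fun x => - ln (f x)).
  by apply/funext => x /=; rewrite expRN lnK ?posrE.
apply: measurableT_comp; first exact: measurable_expR.
by apply/measurable_funN/measurableT_comp => //; exact: measurable_ln.
Qed.

Section MeasurableLosses.
Context {R : realType} {d : measure_display} {T : measurableType d}.
Context (phi : R -> R) {M : nat} (h : 'I_M -> T -> R) (beta : R).
Hypothesis M_gt0 : (0 < M)%N.
Hypothesis h_meas : forall j, measurable_fun setT (h j).
Hypothesis phi_meas : measurable_fun setT phi.

Local Notation A := (T * bool)%type.

Let measurable_lab : measurable_fun setT (fun z : A => lab z.2 : R).
Proof. exact: (measurableT_comp (f := fun b : bool => lab b : R)). Qed.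

Let measurable_margin (j : 'I_M) :
  measurable_fun setT (fun z : A => - lab z.2 * h j z.1).
Proof.
apply: measurable_funM; first by apply: measurable_funN; exact: measurable_lab.
exact: measurableT_comp (h_meas j) measurable_fst.
Qed.

Lemma measurable_lossj j : measurable_fun setT (lossj phi h j).
Proof. exact: measurableT_comp phi_meas (measurable_margin j). Qed.

Lemma measurable_theta_w k i j : measurable_fun setT
  (fun t : iprod (A := A) k => theta_w phi h beta (take i (seq_of_iprod k t)) j).
Proof.
have mw (l : 'I_M) : measurable_fun setT (fun t : iprod (A := A) k =>
    expR (- zeta phi h (take i (seq_of_iprod k t)) l / beta)).
  apply: measurableT_comp; first exact: measurable_expR.
  apply: measurable_funM => //.
  by apply: measurable_funN; exact: measurable_sum_take _ _ _ (measurable_lossj l).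
apply: measurable_funM => //; apply: measurable_inv_pos; first exact: measurable_sum.
by move=> t; exact: weight_sum_gt0.
Qed.

Lemma measurable_mixture_loss_nth k m (th : seq A -> 'I_M -> R) :
  (forall j, measurable_fun setT (fun t : iprod k => th (seq_of_iprod k t) j)) ->
  measurable_fun setT (fun t : iprod k =>
    mixture_loss phi h (nth point (seq_of_iprod k t) m) (th (seq_of_iprod k t))).
Proof.
move=> mth; apply: measurableT_comp phi_meas _.
have mz := measurable_nth_seq_of_iprod (A := A) k m.
apply: measurable_funM.
  by apply: measurable_funN; exact: measurableT_comp measurable_lab mz.
apply: measurable_sum => j; apply: measurable_funM => //.
apply: (measurableT_comp (h_meas j)); exact: measurableT_comp measurable_fst mz.
Qed.

End MeasurableLosses.

Section AggregateRisk.
Context {R : realType} {d : measure_display} {T : measurableType d}.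
Variable P : probability (T * bool)%type R.
Context (phi : R -> R) {M : nat} (h : 'I_M -> T -> R) (beta : R) (n : nat).
Hypothesis M_gt0 : (0 < M)%N.
Hypothesis h_meas : forall j, measurable_fun setT (h j).
Hypothesis h_range : forall j x, -1 <= h j x <= 1.
Hypothesis phi_ge0 : forall x, 0 <= phi x.
Hypothesis phi_convex : forall x y t, 0 <= t <= 1 ->
  phi (t * x + (1 - t) * y) <= t * phi x + (1 - t) * phi y.
Hypothesis phi_d1 : forall x, derivable phi x 1.
Hypothesis phi_d2 : forall x, derivable (derive1 phi) x 1.
Hypothesis beta_gt0 : 0 < beta.
Hypothesis phi_exp_concave : forall x, `|x| <= 1 ->
  derive1 phi x ^+ 2 <= beta * derive1n 2 phi x.
Hypothesis n_gt0 : (0 < n)%N.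

Local Notation A := (T * bool)%type.
Local Notation E := (iter_expect P n).
Let c : R := n%:R^-1.

Let c_ge0 : 0 <= c. Proof. by rewrite invr_ge0 ler0n. Qed.

Let phi_meas : measurable_fun setT phi.
Proof.
apply: continuous_measurable_fun => x.
exact/differentiable_continuous/derivable1_diffP.
Qed.

Let online_term (m i : nat) (s : seq A) : R :=
  c * mixture_loss phi h (nth point s m) (theta_w phi h beta (take i s)).

Let measurable_online_term m i :
  measurable_fun setT (fun t : iprod n => online_term m i (seq_of_iprod n t)).
Proof.
apply: measurable_funM => //.
apply: (measurable_mixture_loss_nth _ _ h_meas phi_meas _ _
  (fun s => theta_w phi h beta (take i s))).
exact: measurable_theta_w.
Qed.

Let expected_online_term_last i : (i < n)%N ->
  E (fun s => (online_term n.-1 i s)%:E) = E (fun s => (online_term i i s)%:E).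
Proof.
move=> lt_in; pose H p z := (c * mixture_loss phi h z (theta_w phi h beta p))%:E.
rewrite (iter_expect_take_nth P n i n.-1 H) ?(iter_expect_take_nth P n i i H) ?leqnn ?lt_in //.
by rewrite ltn_predL n_gt0 andbT -ltnS prednK.
Qed.

Lemma expected_agg_loss_le_online :
  (E (fun s => (agg_loss phi h beta n s)%:E) <=
   E (fun s => (c * online_loss phi h beta s)%:E))%E.
Proof.
have term_ge0 m i s : 0 <= online_term m i s by rewrite mulr_ge0 //; exact: phi_ge0.
have jensen : (E (fun s => (agg_loss phi h beta n s)%:E) <=
    E (fun s => (\sum_(i < n) online_term n.-1 i s)%:E))%E.
  apply: le_iter_expect => [s|s|||s sn]; rewrite ?lee_fin ?sumr_ge0 //.
  - by case: s => [|z s] //=; exact: phi_ge0.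
  - apply/measurable_EFinP; under eq_fun do rewrite agg_loss_mixture ?size_seq_of_iprod //.
    apply: (measurable_mixture_loss_nth _ _ h_meas phi_meas _ _ (theta_hat phi h beta n)) => j.
    apply: measurable_funM => //; apply: measurable_sum => i.
    exact: measurable_theta_w.
  - by apply/measurable_EFinP; exact: measurable_sum.
  - rewrite (agg_loss_mixture _ _ _ _ _ sn n_gt0).
    exact: (mixture_loss_avg_le _ _ phi_convex _
      (fun i : 'I_n => theta_w phi h beta (take i s)) _ n_gt0).
apply: le_trans jensen _; rewrite iter_expect_sum //.
under eq_bigr => i _ do rewrite expected_online_term_last //.
rewrite -iter_expect_sum // (eq_iter_expect P n _ (fun s => (c * online_loss phi h beta s)%:E)) //.
by move=> s sn; rewrite /online_loss sn mulr_sumr.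
Qed.

Let lnM_ge0 : 0 <= beta * ln M%:R.
Proof. by rewrite mulr_ge0 ?(ltW beta_gt0) //; apply: ln_ge0; rewrite ler1n. Qed.

Let scaled_loss j (i : nat) (s : seq A) : R := c * lossj phi h j (nth point s i).

Let scaled_loss_ge0 j i s : 0 <= scaled_loss j i s.
Proof. by rewrite mulr_ge0 //; exact: phi_ge0. Qed.

Let measurable_scaled_loss j i :
  measurable_fun setT (fun t : iprod n => scaled_loss j i (seq_of_iprod n t)).
Proof.
apply: measurable_funM => //; apply: measurableT_comp (measurable_nth_seq_of_iprod n i).
exact: measurable_lossj.
Qed.

Let expected_scaled_loss j (i : 'I_n) :
  E (fun s => (scaled_loss j i s)%:E) = (c%:E * \int[P]_z (lossj phi h j z)%:E)%E.
Proof.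
rewrite (iter_expect_nth P n i (fun z => (c * lossj phi h j z)%:E)) //.
under eq_integral do rewrite EFinM.
rewrite ge0_integralZl // => [|z _]; last by rewrite lee_fin; exact: phi_ge0.
apply/measurable_EFinP; exact: measurable_lossj.
Qed.

Lemma expected_online_loss_le_sum j :
  (E (fun s => (c * online_loss phi h beta s)%:E) <=
   E (fun s => (c * (beta * ln M%:R) + \sum_(i < n) scaled_loss j i s)%:E))%E.
Proof.
apply: le_iter_expect => [s|s|||s sn].
- by rewrite lee_fin mulr_ge0 // sumr_ge0 // => i _; exact: phi_ge0.
- by rewrite lee_fin addr_ge0 ?(mulr_ge0 c_ge0 lnM_ge0) ?sumr_ge0.
- apply/measurable_EFinP; under eq_fun do rewrite /online_loss size_seq_of_iprod mulr_sumr.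
  by apply: measurable_sum => i; exact: measurable_online_term.
- by apply/measurable_EFinP; apply: measurable_funD => //; exact: measurable_sum.
rewrite lee_fin /scaled_loss -mulr_sumr -mulrDr ler_wpM2l //.
have := online_loss_le_zeta phi h beta M_gt0 h_range phi_d1 phi_d2 beta_gt0 phi_exp_concave s j.
by rewrite /zeta (big_nth point) sn big_mkord.
Qed.

Lemma expected_online_loss_le_expert j :
  (E (fun s => (c * online_loss phi h beta s)%:E) <=
   (beta * ln M%:R / n%:R)%:E + \int[P]_z (lossj phi h j z)%:E)%E.
Proof.
apply: le_trans (expected_online_loss_le_sum j) _.
under eq_iter_expect do rewrite EFinD.
rewrite iter_expectD; last 4 first.
- by move=> s; rewrite lee_fin mulr_ge0.
- by move=> s; rewrite lee_fin sumr_ge0.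
- exact: measurable_cst.
- by apply/measurable_EFinP; exact: measurable_sum.
rewrite iter_expect_cst iter_expect_sum //; under eq_bigr do rewrite expected_scaled_loss.
rewrite -ge0_sume_distrl // sumEFin sumr_const card_ord -[_ *+ n]mulr_natr mulVf ?mul1e.
  by rewrite /c mulrC.
by rewrite pnatr_eq0 -lt0n.
Qed.

Lemma expected_agg_loss_le_expert j :
  (E (fun s => (agg_loss phi h beta n s)%:E) <=
   (beta * ln M%:R / n%:R)%:E + \int[P]_z (lossj phi h j z)%:E)%E.
Proof. exact: le_trans expected_agg_loss_le_online (expected_online_loss_le_expert j). Qed.

End AggregateRisk.

Theorem corollary5p3 (R : realType) (d : measure_display) (T : measurableType d)
  (P : probability (T * bool)%type R)
  (M : nat) (hM : (2 <= M)%N)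
  (h : 'I_M -> T -> R)
  (h_meas : forall j, measurable_fun setT (h j))
  (h_range : forall j x, -1 <= h j x <= 1)
  (phi : R -> R)
  (phi_ge0 : forall x, 0 <= phi x)
  (phi_convex : forall (x y t : R), 0 <= t <= 1 ->
      phi (t * x + (1 - t) * y) <= t * phi x + (1 - t) * phi y)
  (phi_d1 : forall x, derivable phi x 1)
  (phi_d2 : forall x, derivable (derive1 phi) x 1)
  (beta_phi : R) (beta_phi_gt0 : 0 < beta_phi)
  (phi_cond : forall x, `|x| <= 1 ->
      (derive1 phi x) ^+ 2 <= beta_phi * derive1n 2 phi x)
  (beta : R) (hbeta : beta_phi <= beta)
  (n : nat) (hn : (0 < n)%N) :
  (iter_expect P n (fun s => (agg_loss phi h beta n s)%:E)
   <= \big[mine/+oo]_(j < M) (\int[P]_z (phi (- lab z.2 * h j z.1))%:E)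
      + (beta * ln M%:R / n%:R)%:E)%E.
Proof.
have beta_gt0 : 0 < beta := lt_le_trans beta_phi_gt0 hbeta.
have phi_exp_concave x : `|x| <= 1 -> derive1 phi x ^+ 2 <= beta * derive1n 2 phi x.
  move=> x1; apply: le_trans (phi_cond _ x1) _; rewrite ler_wpM2r //.
  by rewrite -(pmulr_rge0 _ beta_phi_gt0); exact: le_trans (sqr_ge0 _) (phi_cond _ x1).
have bound := expected_agg_loss_le_expert P phi h beta n (ltnW hM) h_meas h_range
  phi_ge0 phi_convex phi_d1 phi_d2 beta_gt0 phi_exp_concave hn.
apply: (big_ind (fun v => _ <= v + _)%E) => [|x y|j _]; first by rewrite addye ?leey.
  by case: (leP x y).
by rewrite addeC; exact: bound.
Qed.
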